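(* Let $\mathbb{K}$ be a field, $\theta=(\{X_t\}_{t\in G},\{h_t\}_{t\in G})$ a free partial action of a group $G$ on a set $X$, and $\alpha=(\{\mathcal{F}_0(X_t)\}_{t\in G},\{\alpha_t\}_{t\in G})$ the associated partial action on $\mathcal{F}_0(X)$, $\alpha_t(f)=f\circ h_{t^{-1}}$. Let $R=\{(x,h_t(x)): t\in G,\ x\in X_{t^{-1}}\}$ and let $\mathcal{F}_0(R)$ be the space of finitely supported functions $R\to\mathbb{K}$ with pointwise linear operations and product $$(f*g)(x,h_t(x))=\sum_{s\in G,\ x\in X_{s^{-1}}} f(x,h_s(x))\,g(h_s(x),h_t(x)).$$ Then the algebras $\mathcal{F}_0(R)$ and $\mathcal{F}_0(X)\rtimes_\alpha G$ are isomorphic.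
   Context: $\mathcal{F}_0(X)$ is the $\mathbb{K}$-algebra of finitely supported functions $X\to\mathbb{K}$ with pointwise operations; $\mathcal{F}_0(X_t)=\{f\in\mathcal{F}_0(X): f=0 \text{ off } X_t\}$. A partial action of $G$ on a set $X$: subsets $X_t$, bijections $h_t:X_{t^{-1}}\to X_t$, $X_e=X$, $h_e=\mathrm{id}$, $h_t(X_{t^{-1}}\cap X_s)=X_t\cap X_{ts}$, $h_th_s=h_{ts}$ on $X_{s^{-1}}\cap X_{s^{-1}t^{-1}}$; free means $h_t(x)=x$ implies $t=e$. The partial skew group ring $\mathcal{F}_0(X)\rtimes_\alpha G$ is the set of finite formal sums $\sum_t a_t\delta_t$ with $a_t\in\mathcal{F}_0(X_t)$, usual addition, and multiplication determined by $(a_t\delta_t)(b_s\delta_s)=\alpha_t(\alpha_{t^{-1}}(a_t)b_s)\delta_{ts}$. *)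

From HB Require Import structures.
From mathcomp Require Import all_boot all_order all_algebra.
From mathcomp Require Import boolp classical_sets functions cardinality fsbigop.
Set Implicit Arguments. Unset Strict Implicit. Unset Printing Implicit Defensive.
Import Order.TTheory GRing.Theory Num.Theory.
Local Open Scope classical_set_scope.
Local Open Scope ring_scope.

(* The carrier is a
   choiceType (harmless classically) so that finitely supported sums
   over it can be formed with mathcomp-analysis' \sum_(i \in A). *)
Record group := Group {
  gcar :> choiceType;
  gmul : gcar -> gcar -> gcar;
  ginv : gcar -> gcar;
  gone : gcar;
  gmulA : forall a b c, gmul a (gmul b c) = gmul (gmul a b) c;
  gmul1 : forall a, gmul gone a = a;
  gmulV : forall a, gmul (ginv a) a = gone
}.

(* Partial action theta = ({X_t}, {h_t}) of G on X.  h t is a total map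
   X -> X of which only the restriction X_{t^-1} -> X_t matters. *)
Definition partial_action (G : group) (X : Type)
    (D : G -> set X) (h : G -> X -> X) : Prop :=
  [/\
      (forall t, set_bij (D (ginv t)) (D t) (h t)),
      D (gone G) = setT,
      (forall x, h (gone G) x = x),
      (forall t s, h t @` (D (ginv t) `&` D s) = D t `&` D (gmul t s)) &
      (forall t s x, D (ginv s) x -> D (gmul (ginv s) (ginv t)) x ->
         h t (h s x) = h (gmul t s) x)].

Definition free_action (G : group) (X : Type)
    (D : G -> set X) (h : G -> X -> X) : Prop :=
  forall t x, D (ginv t) x -> h t x = x -> t = gone G.

Section Algebras.
Variables (K : fieldType) (G : group) (X : choiceType)
          (D : G -> set X) (h : G -> X -> X).

Definition fin_supp (T : Type) (f : T -> K) := finite_set [set x | f x != 0].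

Definition F0_on (t : G) (f : X -> K) :=
  fin_supp f /\ (forall x, f x != 0 -> D t x).

Definition alpha (t : G) (f : X -> K) : X -> K :=
  fun y => if `[< D t y >] then f (h (ginv t) y) else 0.

(* ---- the partial skew group ring F_0(X) x|_alpha G ----
   sum_t a_t delta_t  is represented by  a : G -> X -> K  *)
Definition skew_elt (a : G -> X -> K) :=
  finite_set [set t | exists x, a t x != 0] /\ (forall t, F0_on t (a t)).

Definition skew_add (a b : G -> X -> K) := fun t x => a t x + b t x.
Definition skew_scale (k : K) (a : G -> X -> K) := fun t x => k * a t x.

(* (a_t delta_t)(b_s delta_s) = alpha_t(alpha_{t^-1}(a_t) b_s) delta_{ts},
   extended bilinearly *)
Definition skew_mul (a b : G -> X -> K) : G -> X -> K :=
  fun u x => \sum_(t \in [set: G]) \sum_(s \in [set s | gmul t s = u])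
     alpha t (fun z => alpha (ginv t) (a t) z * b s z) x.

Definition Rel : set (X * X) :=
  [set p | exists t, D (ginv t) p.1 /\ p.2 = h t p.1].

(* finitely supported functions on R, viewed as functions X*X -> K vanishing off R *)
Definition F0R_elt (f : X * X -> K) :=
  fin_supp f /\ (forall p, f p != 0 -> Rel p).

Definition F0R_add (f g : X * X -> K) := fun p => f p + g p.
Definition F0R_scale (k : K) (f : X * X -> K) := fun p => k * f p.

Definition F0R_mul (f g : X * X -> K) : X * X -> K :=
  fun p => if `[< Rel p >] then
     \sum_(s \in [set s | D (ginv s) p.1])
        f (p.1, h s p.1) * g (h s p.1, p.2)
   else 0.

End Algebras.

(* By freeness, an arrow (x, y) of R carries a unique label t with x in X_t
   and y = h_{t^-1}(x).  Sending f to the element whose t-th coefficient is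
   x |-> f(x, h_{t^-1}(x)) on X_t is therefore a linear bijection
   F_0(R) -> F_0(X) x|_alpha G.  It is multiplicative because the product
   a_t delta_t * b_s delta_s only sees the points x of X_t, where
   alpha_t(alpha_{t^-1}(a_t) b_s)(x) = a_t(x) b_s(h_{t^-1} x): this is the
   term of f * g indexed by the arrow (x, h_{t^-1} x) followed by
   (h_{t^-1} x, h_{(ts)^-1} x). *)
From HB Require Import structures.
From mathcomp Require Import all_boot all_order all_algebra.
From mathcomp Require Import boolp classical_sets functions cardinality fsbigop.
Local Open Scope classical_set_scope.
Local Open Scope ring_scope.
Set Implicit Arguments. Unset Strict Implicit.
Import GRing.Theory.

Section GroupTheory.
Variable G : group.
Implicit Types a b c : G.
Local Notation "a ** b" := (gmul a b) (at level 40).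

Lemma gmulVr a : a ** ginv a = gone G.
Proof.
have -> : a ** ginv a = (ginv (ginv a) ** ginv a) ** (a ** ginv a).
  by rewrite gmulV gmul1.
by rewrite -gmulA (gmulA (ginv a) a) gmulV gmul1 gmulV.
Qed.

Lemma gmulr1 a : a ** gone G = a.
Proof. by rewrite -(gmulV a) gmulA gmulVr gmul1. Qed.

Lemma ginvK a : ginv (ginv a) = a.
Proof. by rewrite -[LHS]gmulr1 -(gmulV a) gmulA gmulV gmul1. Qed.

Lemma ginv_uniq a b : a ** b = gone G -> a = ginv b.
Proof. by move=> e; rewrite -[a]gmulr1 -(gmulVr b) gmulA e gmul1. Qed.

Lemma ginvM a b : ginv (a ** b) = ginv b ** ginv a.
Proof.
apply/esym/ginv_uniq.
by rewrite -!gmulA (gmulA (ginv a)) gmulV gmul1 gmulV.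
Qed.

Lemma ginv_inj a b : ginv a = ginv b -> a = b.
Proof. by move=> e; rewrite -(ginvK a) e ginvK. Qed.

Lemma gmul_eq_ginvl a b c : (a ** b = c) <-> (b = ginv a ** c).
Proof.
split=> [<-|->]; first by rewrite gmulA gmulV gmul1.
by rewrite gmulA gmulVr gmul1.
Qed.

End GroupTheory.

Section PartialAction.
Variables (G : group) (X : choiceType) (D : G -> set X) (h : G -> X -> X).
Hypothesis pact : partial_action D h.

Lemma pact_dom t x : D (ginv t) x -> D t (h t x).
Proof. by case: pact => bij _ _ _ _; case: (bij t) => maps _ _; apply: maps. Qed.

Lemma pact_domM t s x : D (ginv t) x -> D s x -> D (gmul t s) (h t x).
Proof.
case: pact => _ _ _ img _ Dx Ds.
have : (h t @` (D (ginv t) `&` D s)) (h t x) by exists x.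
by rewrite img => -[].
Qed.

Lemma pact_comp t s x : D (ginv s) x -> D (gmul (ginv s) (ginv t)) x ->
  h t (h s x) = h (gmul t s) x.
Proof. by case: pact => _ _ _ _; apply. Qed.

Lemma pactK t x : D (ginv t) x -> h (ginv t) (h t x) = x.
Proof.
case: pact => _ DT h1 _ _ Dx.
by rewrite pact_comp ?gmulV ?h1 // ginvK gmulV DT.
Qed.

Hypothesis free : free_action D h.

Lemma pact_label_uniq t t' x :
  D t x -> D t' x -> h (ginv t) x = h (ginv t') x -> t = t'.
Proof.
move=> Dt Dt' e; set y := h (ginv t) x.
have Dtx : D (ginv (ginv t)) x by rewrite ginvK.
have Dy : D (ginv t) y := pact_dom Dtx.
have hy : h t y = x by have := pactK Dtx; rewrite ginvK.
have Dy' : D (ginv (gmul (ginv t') t)) y.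
  by rewrite ginvM ginvK; apply: pact_domM.
have fix_y : h (gmul (ginv t') t) y = y.
  rewrite -pact_comp // ?hy -?e //.
  by move: Dy'; rewrite ginvM ginvK.
have /ginv_uniq/ginv_inj := free Dy' fix_y.
by move/esym.
Qed.

End PartialAction.

Section Isomorphism.
Variables (K : fieldType) (G : group) (X : choiceType).
Variables (D : G -> set X) (h : G -> X -> X).
Hypothesis pact : partial_action D h.
Hypothesis free : free_action D h.

Definition F0R_to_skew (f : X * X -> K) : G -> X -> K :=
  fun t x => if `[< D t x >] then f (x, h (ginv t) x) else 0.

(* On R, the unique t with p.1 in X_t and p.2 = h_{t^-1}(p.1); off R the
   value gone is junk. *)
Definition rel_label (p : X * X) : G :=
  xget (gone G) [set t | D t p.1 /\ p.2 = h (ginv t) p.1].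

Definition skew_to_F0R (a : G -> X -> K) : X * X -> K :=
  fun p => if `[< Rel D h p >] then a (rel_label p) p.1 else 0.

Lemma RelP x y : Rel D h (x, y) <-> exists t, D t x /\ y = h (ginv t) x.
Proof. by split=> -[t Ht]; exists (ginv t); rewrite ginvK. Qed.

Lemma rel_labelP x y : Rel D h (x, y) ->
  D (rel_label (x, y)) x /\ y = h (ginv (rel_label (x, y))) x.
Proof.
move=> /RelP[t Ht].
exact: (@xgetI _ (gone G) [set t | D t x /\ y = h (ginv t) x] t).
Qed.

Lemma rel_labelE t x : D t x -> rel_label (x, h (ginv t) x) = t.
Proof.
move=> Dx; have Rx : Rel D h (x, h (ginv t) x) by apply/RelP; exists t.
have [Dl el] := rel_labelP Rx.
by apply: (pact_label_uniq pact free Dl Dx); rewrite -el.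
Qed.

Lemma F0R_to_skew_elt f : F0R_elt D h f -> skew_elt D (F0R_to_skew f).
Proof.
move=> [fin_f _]; split.
  apply: (sub_finite_set (B := rel_label @` [set p | f p != 0])).
    move=> t [x]; rewrite /F0R_to_skew; case: asboolP => Dx; rewrite ?eqxx //.
    by exists (x, h (ginv t) x) => //; apply: rel_labelE.
  exact: finite_image.
move=> t; split; last first.
  by move=> x; rewrite /F0R_to_skew; case: asboolP => //; rewrite eqxx.
apply: (sub_finite_set (B := fst @` [set p | f p != 0])); last exact: finite_image.
move=> x /=; rewrite /F0R_to_skew; case: asboolP => Dx; rewrite ?eqxx // => fx.
by exists (x, h (ginv t) x).
Qed.

Lemma F0R_elt_eq0 (f : X * X -> K) p : F0R_elt D h f -> ~ Rel D h p -> f p = 0.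
Proof. by move=> [_ f_R] notR; apply/eqP; apply: contra_notT notR => /f_R. Qed.

Lemma F0R_to_skew_inj f g : F0R_elt D h f -> F0R_elt D h g ->
  F0R_to_skew f = F0R_to_skew g -> f = g.
Proof.
move=> Ff Fg e; apply/funext => -[x y].
have [/RelP[t [Dx ->]] | notR] := pselect (Rel D h (x, y)).
  by have := congr1 (fun a => a t x) e; rewrite /F0R_to_skew asboolT.
by rewrite !F0R_elt_eq0.
Qed.

Lemma skew_to_F0R_elt a : skew_elt D a -> F0R_elt D h (skew_to_F0R a).
Proof.
move=> [fin_a a_on]; split; last first.
  by move=> p; rewrite /skew_to_F0R; case: asboolP => // _; rewrite eqxx.
pose supp := [set t | exists x, a t x != 0] `*`` (fun t => [set x | a t x != 0]).
apply: (sub_finite_set (B := (fun q => (q.2, h (ginv q.1) q.2)) @` supp)).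
  move=> [x y]; rewrite /skew_to_F0R /=.
  case: asboolP => [Rxy | _]; rewrite ?eqxx // => axy.
  have [_ ey] := rel_labelP Rxy.
  by exists (rel_label (x, y), x); [split => //; exists x | rewrite -ey].
by apply/finite_image/finite_setXR => // t _; apply: (a_on t).1.
Qed.

Lemma skew_to_F0RK a : skew_elt D a -> F0R_to_skew (skew_to_F0R a) = a.
Proof.
move=> [_ a_on]; apply/funext => t; apply/funext => x.
rewrite /F0R_to_skew /skew_to_F0R /=; case: asboolP => Dx.
  by rewrite asboolT ?rel_labelE //; apply/RelP; exists t.
by apply/esym/eqP; apply: contra_notT Dx => /(a_on t).2.
Qed.

Lemma F0R_to_skew_add f g :
  F0R_to_skew (F0R_add f g) = skew_add (F0R_to_skew f) (F0R_to_skew g).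
Proof.
apply/funext => t; apply/funext => x; rewrite /F0R_to_skew /skew_add /F0R_add.
by case: asboolP => //; rewrite addr0.
Qed.

Lemma F0R_to_skew_scale k f :
  F0R_to_skew (F0R_scale k f) = skew_scale k (F0R_to_skew f).
Proof.
apply/funext => t; apply/funext => x; rewrite /F0R_to_skew /skew_scale /F0R_scale.
by case: asboolP => //; rewrite mulr0.
Qed.

Lemma skew_mul_termE f g u t x :
  alpha D h t (fun z => alpha D h (ginv t) (F0R_to_skew f t) z *
                        F0R_to_skew g (gmul (ginv t) u) z) x
  = if `[< D t x >] then (if `[< D u x >] then
       f (x, h (ginv t) x) * g (h (ginv t) x, h (ginv u) x) else 0) else 0.
Proof.
rewrite {1}/alpha; case: (asboolP (D t x)) => Dx //.
have Dtx : D (ginv (ginv t)) x by rewrite ginvK.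
set y := h (ginv t) x.
have Dy : D (ginv t) y := pact_dom pact Dtx.
have hy : h t y = x by have := pactK pact Dtx; rewrite ginvK.
rewrite /alpha ginvK asboolT // hy /F0R_to_skew asboolT // -/y.
case: (asboolP (D u x)) => Dux.
  have Dsy : D (gmul (ginv t) u) y := pact_domM pact Dtx Dux.
  rewrite asboolT //; congr (_ * g (y, _)).
  rewrite ginvM ginvK /y (pact_comp pact) //; last first.
    by rewrite ginvM !ginvK gmulA gmulVr gmul1.
  by rewrite -gmulA gmulVr gmulr1.
rewrite asboolF ?mulr0 // => Dsy; apply: Dux.
by have := pact_domM pact Dy Dsy; rewrite hy gmulA gmulVr gmul1.
Qed.

Lemma F0R_to_skew_mul f g :
  F0R_to_skew (F0R_mul D h f g) = skew_mul D h (F0R_to_skew f) (F0R_to_skew g).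
Proof.
apply/funext => u; apply/funext => x; rewrite /skew_mul.
under eq_fsbigr => t _.
  have -> : [set s | gmul t s = u] = [set gmul (ginv t) u].
    by apply/seteqP; split => s /= /gmul_eq_ginvl.
  rewrite fsbig_set1 skew_mul_termE.
over.
rewrite /F0R_to_skew; case: (asboolP (D u x)) => Dux; last first.
  by apply/esym/fsbig1 => t _; case: ifP.
rewrite /F0R_mul asboolT /=; last by apply/RelP; exists u.
rewrite fsbig_mkcond (reindex_fsbigT (@ginv G)); last first.
  by exists (@ginv G) => ?; apply: ginvK.
apply: eq_fsbigr => t _; rewrite /patch.
have [Dx | Dx] := pselect (D t x).
  by rewrite mem_set /= ?ginvK // asboolT.
by rewrite memNset /= ?ginvK // asboolF.
Qed.

End Isomorphism.

Theorem mainTheorem10 (K : fieldType) (G : group) (X : choiceType)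
    (D : G -> set X) (h : G -> X -> X) :
  partial_action D h -> free_action D h ->
  exists Phi : (X * X -> K) -> (G -> X -> K),
    (forall f, F0R_elt D h f -> skew_elt D (Phi f)) /\
    (forall f g, F0R_elt D h f -> F0R_elt D h g -> Phi f = Phi g -> f = g) /\
    (forall a, skew_elt D a -> exists2 f, F0R_elt D h f & Phi f = a) /\
    (forall f g, F0R_elt D h f -> F0R_elt D h g ->
       Phi (F0R_add f g) = skew_add (Phi f) (Phi g)) /\
    (forall (k : K) f, F0R_elt D h f ->
       Phi (F0R_scale k f) = skew_scale k (Phi f)) /\
    (forall f g, F0R_elt D h f -> F0R_elt D h g ->
       Phi (F0R_mul D h f g) = skew_mul D h (Phi f) (Phi g)).
Proof.
move=> pact free; exists (@F0R_to_skew K G X D h).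
split; first exact: F0R_to_skew_elt.
split; first exact: F0R_to_skew_inj.
split.
  move=> a Ha; exists (skew_to_F0R D h a); first exact: skew_to_F0R_elt.
  exact: skew_to_F0RK.
split; first by move=> f g _ _; apply: F0R_to_skew_add.
split; first by move=> k f _; apply: F0R_to_skew_scale.
by move=> f g _ _; apply: F0R_to_skew_mul.
Qed.
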